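(* Let $n\ge0$ and $k\ge1$. For every formula $\alpha$: if $\vDash_{\mathcal{R}_n^k}\alpha$ then $\vdash_{L_n^k}\alpha$.
   Context: Formulas are built from a countable set of propositional variables using unary $\neg,\circ$ and binary $\land,\lor,\to$; $\circ^0\alpha=\alpha$, $\circ^{m+1}\alpha=\circ(\circ^m\alpha)$, $\alpha\leftrightarrow\beta:=(\alpha\to\beta)\land(\beta\to\alpha)$. mbC is the Hilbert calculus with the axiom schemas of a standard axiomatization of positive classical propositional logic in $\land,\lor,\to$, plus (TND) $\alpha\lor\neg\alpha$ and (bc1) $\circ\alpha\to(\alpha\to(\neg\alpha\to\beta))$, modus ponens being the only rule; mbCciw is mbC plus (ciw) $\circ\alpha\lor(\alpha\land\neg\alpha)$. For $n\ge0$, $k\ge1$, $L_n^k$ is mbCciw plus (cc$^n$) $\circ^{n+2}\alpha$, (dn) $\neg\neg\alpha\leftrightarrow\alpha$, and (ip$^j$) $\neg\circ^j\neg\alpha\leftrightarrow\neg\circ^j\alpha$ for each $1\le j<k$. $\mathcal{M}_1$ is the three-valued Nmatrix with values $T,t,F$, designated set $D=\{T,t\}$, and: $\neg T=\{F\}$, $\neg t=\{t\}$, $\neg F=\{T\}$; $\circ T=\circ F=\{T,t\}$, $\circ t=\{F\}$; $x\land y=\{T,t\}$ if $x,y\in D$ else $\{F\}$; $x\lor y=\{T,t\}$ if $x\in D$ or $y\in D$ else $\{F\}$; $x\to y=\{T,t\}$ if $x\notin D$ or $y\in D$ else $\{F\}$. A valuation over $\mathcal{M}_1$ is a map $\vartheta$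 from formulas to $\{T,t,F\}$ respecting these multioperations. $\mathcal{F}_n^k$ is the set of valuations $\vartheta$ over $\mathcal{M}_1$ such that for every formula $\alpha$: (vCc$^n$) if $\vartheta(\circ^n\alpha)\in\{T,F\}$ then $\vartheta(\circ^{n+1}\alpha)=T$; and (vip$^j$) $\vartheta(\circ^j\alpha)=\vartheta(\circ^j\neg\alpha)$ for each $1\le j\le k-1$. $\mathcal{R}_n^k=\langle\mathcal{M}_1,\mathcal{F}_n^k\rangle$, and $\vDash_{\mathcal{R}_n^k}\alpha$ means $\vartheta(\alpha)\in D$ for all $\vartheta\in\mathcal{F}_n^k$. *)

From Stdlib Require Import Arith.

Inductive formula : Type :=
| Var  : nat -> formula
| Neg  : formula -> formula
| Circ : formula -> formula
| And  : formula -> formula -> formula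
| Or   : formula -> formula -> formula
| Imp  : formula -> formula -> formula.

Fixpoint circn (m : nat) (a : formula) : formula :=
  match m with
  | 0 => a
  | S m' => Circ (circn m' a)
  end.

Definition Iff (a b : formula) : formula := And (Imp a b) (Imp b a).

(* Axiom schemas of mbC: a standard axiomatization of positive classical
   propositional logic (Ax1-Ax9, as in Carnielli-Coniglio) plus (TND) and (bc1). *)
Inductive mbC_axiom : formula -> Prop :=
| Ax1 a b : mbC_axiom (Imp a (Imp b a))
| Ax2 a b c : mbC_axiom (Imp (Imp a b) (Imp (Imp a (Imp b c)) (Imp a c)))
| Ax3 a b : mbC_axiom (Imp a (Imp b (And a b)))
| Ax4 a b : mbC_axiom (Imp (And a b) a)
| Ax5 a b : mbC_axiom (Imp (And a b) b)
| Ax6 a b : mbC_axiom (Imp a (Or a b))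
| Ax7 a b : mbC_axiom (Imp b (Or a b))
| Ax8 a b c : mbC_axiom (Imp (Imp a c) (Imp (Imp b c) (Imp (Or a b) c)))
| Ax9 a b : mbC_axiom (Or a (Imp a b))
| AxTND a : mbC_axiom (Or a (Neg a))
| Axbc1 a b : mbC_axiom (Imp (Circ a) (Imp a (Imp (Neg a) b))).

Inductive Lnk_axiom (n k : nat) : formula -> Prop :=
| Ax_mbC a : mbC_axiom a -> Lnk_axiom n k a
| Ax_ciw a : Lnk_axiom n k (Or (Circ a) (And a (Neg a)))
| Ax_cc a : Lnk_axiom n k (circn (n + 2) a)
| Ax_dn a : Lnk_axiom n k (Iff (Neg (Neg a)) a)
| Ax_ip j a : 1 <= j -> j < k ->
    Lnk_axiom n k (Iff (Neg (circn j (Neg a))) (Neg (circn j a))).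

Inductive Lnk_provable (n k : nat) : formula -> Prop :=
| Pr_ax a : Lnk_axiom n k a -> Lnk_provable n k a
| Pr_mp a b : Lnk_provable n k a -> Lnk_provable n k (Imp a b) ->
    Lnk_provable n k b.

Inductive val3 : Type := VT | Vt | VF.

Definition designated (x : val3) : Prop := x = VT \/ x = Vt.

(* Multioperations of M_1, as membership predicates: op x y z <-> z ∈ x op y *)
Definition neg_m (x z : val3) : Prop :=
  match x with
  | VT => z = VF
  | Vt => z = Vt
  | VF => z = VT
  end.

Definition circ_m (x z : val3) : Prop :=
  match x with
  | Vt => z = VF
  | _ => designated z
  end.

Definition and_m (x y z : val3) : Prop :=
  (designated x /\ designated y -> designated z) /\
  (~ (designated x /\ designated y) -> z = VF).

Definition or_m (x y z : val3) : Prop :=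
  (designated x \/ designated y -> designated z) /\
  (~ (designated x \/ designated y) -> z = VF).

Definition imp_m (x y z : val3) : Prop :=
  (~ designated x \/ designated y -> designated z) /\
  (~ (~ designated x \/ designated y) -> z = VF).

Definition valuation (v : formula -> val3) : Prop :=
  forall a b : formula,
    neg_m (v a) (v (Neg a)) /\
    circ_m (v a) (v (Circ a)) /\
    and_m (v a) (v b) (v (And a b)) /\
    or_m (v a) (v b) (v (Or a b)) /\
    imp_m (v a) (v b) (v (Imp a b)).

Definition in_Fnk (n k : nat) (v : formula -> val3) : Prop :=
  valuation v /\
  (forall a : formula,
     (v (circn n a) = VT \/ v (circn n a) = VF) -> v (circn (S n) a) = VT) /\
  (forall (j : nat) (a : formula), 1 <= j -> j <= k - 1 ->
     v (circn j a) = v (circn j (Neg a))).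

Definition Rnk_valid (n k : nat) (a : formula) : Prop :=
  forall v, in_Fnk n k v -> designated (v a).

From Stdlib Require Import Arith Lia Classical ClassicalEpsilon Cantor.

(** Canonical-model argument. If [a] is not a theorem of L_n^k, Lindenbaum's
    construction yields a set [D] of formulas that is closed under derivability,
    omits [a], and is maximal with these properties. Such a set decides the
    positive connectives classically, so the value of [b] may be read off from
    the pair ([b] in [D], [~ b] in [D]): T for (yes, no), t for (yes, yes), F
    otherwise. Axioms (ciw) and (bc1) make [o b] designated exactly when [b] is
    not t, (dn) makes [~] behave as in M_1, (cc^n) yields (vCc^n) and (ip^j)
    yields (vip^j). This valuation lies in F_n^k and refutes [a]. *)

Set Implicit Arguments.
Unset Strict Implicit.

Fixpoint formula_code (f : formula) : nat :=
  match f with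
  | Var m => Cantor.to_nat (0, m)
  | Neg a => Cantor.to_nat (1, formula_code a)
  | Circ a => Cantor.to_nat (2, formula_code a)
  | And a b => Cantor.to_nat (3, Cantor.to_nat (formula_code a, formula_code b))
  | Or a b => Cantor.to_nat (4, Cantor.to_nat (formula_code a, formula_code b))
  | Imp a b => Cantor.to_nat (5, Cantor.to_nat (formula_code a, formula_code b))
  end.

Lemma Cantor_to_nat_inj p q : Cantor.to_nat p = Cantor.to_nat q -> p = q.
Proof. intro H. rewrite <- (cancel_of_to p), <- (cancel_of_to q), H. reflexivity. Qed.

Lemma formula_code_inj a b : formula_code a = formula_code b -> a = b.
Proof.
  revert b. induction a; destruct b; cbn [formula_code]; intro H;
    apply Cantor_to_nat_inj in H; try discriminate;
    apply (f_equal snd) in H; cbn [snd] in H.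
  - subst; reflexivity.
  - f_equal; auto.
  - f_equal; auto.
  - apply Cantor_to_nat_inj in H; injection H; intros; f_equal; auto.
  - apply Cantor_to_nat_inj in H; injection H; intros; f_equal; auto.
  - apply Cantor_to_nat_inj in H; injection H; intros; f_equal; auto.
Qed.

Section Hilbert.

Variable Ax : formula -> Prop.

Inductive derivable (G : formula -> Prop) : formula -> Prop :=
| der_hyp a : G a -> derivable G a
| der_ax a : Ax a -> derivable G a
| der_mp a b : derivable G a -> derivable G (Imp a b) -> derivable G b.

Definition extend (G : formula -> Prop) (a : formula) : formula -> Prop :=
  fun x => G x \/ x = a.

Lemma derivable_mono (G H : formula -> Prop) a :
  (forall x, G x -> H x) -> derivable G a -> derivable H a.
Proof.
  intros HGH Ha. induction Ha as [x Hx|x Hx|x y _ IH1 _ IH2].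
  - apply der_hyp, HGH, Hx.
  - apply der_ax, Hx.
  - exact (der_mp IH1 IH2).
Qed.

Hypothesis mbC_Ax : forall a, mbC_axiom a -> Ax a.

Lemma derivable_mbC G a : mbC_axiom a -> derivable G a.
Proof. intro Ha. apply der_ax, mbC_Ax, Ha. Qed.

Lemma derivable_imp_refl G a : derivable G (Imp a a).
Proof.
  apply (der_mp (a := Imp a (Imp (Imp a a) a))); [apply derivable_mbC, Ax1|].
  apply (der_mp (a := Imp a (Imp a a))); apply derivable_mbC; [apply Ax1 | apply Ax2].
Qed.

Lemma deduction G a b : derivable (extend G a) b -> derivable G (Imp a b).
Proof.
  intro Hb. induction Hb as [x [Hx|<-]|x Hx|x y _ IH1 _ IH2].
  - apply (der_mp (a := x)); [apply der_hyp, Hx | apply derivable_mbC, Ax1].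
  - apply derivable_imp_refl.
  - apply (der_mp (a := x)); [apply der_ax, Hx | apply derivable_mbC, Ax1].
  - apply (der_mp (a := Imp a (Imp x y))); [exact IH2|].
    apply (der_mp (a := Imp a x)); [exact IH1 | apply derivable_mbC, Ax2].
Qed.

Lemma derivable_cut G a b :
  derivable G a -> derivable (extend G a) b -> derivable G b.
Proof. intros Ha Hb. exact (der_mp Ha (deduction Hb)). Qed.

Record saturated (phi : formula) (D : formula -> Prop) : Prop := {
  saturated_closed : forall x, derivable D x -> D x;
  saturated_not : ~ D phi;
  saturated_maximal : forall x, D x \/ derivable (extend D x) phi }.

Fixpoint lindenbaum_stage (phi : formula) (m : nat) : formula -> Prop :=
  match m with
  | 0 => fun _ => False
  | S m => fun x => lindenbaum_stage phi m x \/
      (formula_code x = m /\ ~ derivable (extend (lindenbaum_stage phi m) x) phi)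
  end.

Definition lindenbaum (phi : formula) : formula -> Prop :=
  fun x => exists m, lindenbaum_stage phi m x.

Lemma lindenbaum_stage_mono phi m m' x :
  m <= m' -> lindenbaum_stage phi m x -> lindenbaum_stage phi m' x.
Proof. induction 1; simpl; auto. Qed.

Lemma lindenbaum_stage_underivable phi m :
  ~ derivable (fun _ => False) phi -> ~ derivable (lindenbaum_stage phi m) phi.
Proof.
  intro H0. induction m as [|m IH]; [exact H0|]. simpl.
  destruct (classic (exists y, formula_code y = m /\
                      ~ derivable (extend (lindenbaum_stage phi m) y) phi))
    as [[y [Hy Hny]]|Hnone]; intro Hder.
  - apply Hny. revert Hder. apply derivable_mono.
    intros x [Hx|[Hx _]]; [left; exact Hx | right; apply formula_code_inj; congruence].
  - apply IH. revert Hder. apply derivable_mono.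
    intros x [Hx|Hx]; [exact Hx | exfalso; apply Hnone; exists x; exact Hx].
Qed.

Lemma derivable_lindenbaum phi a :
  derivable (lindenbaum phi) a -> exists m, derivable (lindenbaum_stage phi m) a.
Proof.
  intro Ha. induction Ha as [x [m Hx]|x Hx|x y _ [m1 IH1] _ [m2 IH2]].
  - exists m. apply der_hyp, Hx.
  - exists 0. apply der_ax, Hx.
  - exists (max m1 m2). apply (der_mp (a := x)).
    + revert IH1. apply derivable_mono. intro z. apply lindenbaum_stage_mono. lia.
    + revert IH2. apply derivable_mono. intro z. apply lindenbaum_stage_mono. lia.
Qed.

Lemma lindenbaum_saturated phi :
  ~ derivable (fun _ => False) phi -> saturated phi (lindenbaum phi).
Proof.
  intro H0.
  assert (Hnot : ~ derivable (lindenbaum phi) phi).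
  { intro Hder. destruct (derivable_lindenbaum Hder) as [m Hm].
    exact (lindenbaum_stage_underivable H0 Hm). }
  assert (Hmax : forall x, lindenbaum phi x \/ derivable (extend (lindenbaum phi) x) phi).
  { intro x. destruct (classic (derivable (extend (lindenbaum phi) x) phi)) as [H|H];
      [right; exact H | left].
    exists (S (formula_code x)). right. split; [reflexivity|].
    intro Hder. apply H. revert Hder. apply derivable_mono.
    intros y [Hy|Hy]; [left; exists (formula_code x); exact Hy | right; exact Hy]. }
  split; [| intro Hphi; apply Hnot, der_hyp, Hphi | exact Hmax].
  intros x Hx. destruct (Hmax x) as [H|H]; [exact H|].
  exfalso. exact (Hnot (derivable_cut Hx H)).
Qed.

Section Saturated.

Variables (phi : formula) (D : formula -> Prop).
Hypothesis HD : saturated phi D.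

Lemma saturated_axiom a : Ax a -> D a.
Proof. intro Ha. apply (saturated_closed HD), der_ax, Ha. Qed.

Lemma saturated_mbC a : mbC_axiom a -> D a.
Proof. intro Ha. apply saturated_axiom, mbC_Ax, Ha. Qed.

Lemma saturated_mp a b : D a -> D (Imp a b) -> D b.
Proof. intros Ha Hab. apply (saturated_closed HD). exact (der_mp (der_hyp Ha) (der_hyp Hab)). Qed.

Lemma saturated_or a b : D (Or a b) <-> D a \/ D b.
Proof.
  split.
  - intro Hab. apply NNPP. intro Hnone. apply (saturated_not HD).
    destruct (saturated_maximal HD a) as [Ha|Ha]; [tauto|].
    destruct (saturated_maximal HD b) as [Hb|Hb]; [tauto|].
    apply (saturated_mp Hab), (saturated_closed HD).
    apply (der_mp (deduction Hb)), (der_mp (deduction Ha)), derivable_mbC, Ax8.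
  - intros [Ha|Hb].
    + apply (saturated_mp Ha), saturated_mbC, Ax6.
    + apply (saturated_mp Hb), saturated_mbC, Ax7.
Qed.

Lemma saturated_and a b : D (And a b) <-> D a /\ D b.
Proof.
  split.
  - intro Hab. split; apply (saturated_mp Hab), saturated_mbC; [apply Ax4 | apply Ax5].
  - intros [Ha Hb]. apply (saturated_mp Hb), (saturated_mp Ha), saturated_mbC, Ax3.
Qed.

Lemma saturated_imp a b : D (Imp a b) <-> ~ D a \/ D b.
Proof.
  split.
  - intro Hab. destruct (classic (D a)) as [Ha|Ha].
    + right. exact (saturated_mp Ha Hab).
    + left. exact Ha.
  - intros [Ha|Hb].
    + assert (Hem : D (Or a (Imp a b))) by apply saturated_mbC, Ax9.
      apply saturated_or in Hem. tauto.
    + apply (saturated_mp Hb), saturated_mbC, Ax1.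
Qed.

Lemma saturated_iff a b : D (Iff a b) -> (D a <-> D b).
Proof.
  intro Hab. apply saturated_and in Hab. destruct Hab as [Hto Hfrom].
  split; intro H; [exact (saturated_mp H Hto) | exact (saturated_mp H Hfrom)].
Qed.

Lemma saturated_tnd a : D a \/ D (Neg a).
Proof. apply saturated_or, saturated_mbC, AxTND. Qed.

Lemma saturated_bc1 a : D (Circ a) -> D a -> D (Neg a) -> False.
Proof.
  intros Hc Ha Hn. apply (saturated_not HD).
  apply (saturated_mp Hn), (saturated_mp Ha), (saturated_mp Hc), saturated_mbC, Axbc1.
Qed.

End Saturated.

End Hilbert.

Lemma Lnk_provable_of_derivable n k a :
  derivable (Lnk_axiom n k) (fun _ => False) a -> Lnk_provable n k a.
Proof.
  intro Ha. induction Ha as [x []|x Hx|x y _ IH1 _ IH2].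
  - apply Pr_ax, Hx.
  - exact (Pr_mp _ _ _ _ IH1 IH2).
Qed.

Definition canonical_val (D : formula -> Prop) (x : formula) : val3 :=
  if excluded_middle_informative (D x) then
    if excluded_middle_informative (D (Neg x)) then Vt else VT
  else VF.

Lemma canonical_val_eq_VT D x : canonical_val D x = VT <-> D x /\ ~ D (Neg x).
Proof.
  unfold canonical_val.
  destruct (excluded_middle_informative (D x)), (excluded_middle_informative (D (Neg x)));
    split; intro; solve [tauto | discriminate | reflexivity].
Qed.

Lemma canonical_val_eq_Vt D x : canonical_val D x = Vt <-> D x /\ D (Neg x).
Proof.
  unfold canonical_val.
  destruct (excluded_middle_informative (D x)), (excluded_middle_informative (D (Neg x)));
    split; intro; solve [tauto | discriminate | reflexivity].
Qed.

Lemma canonical_val_eq_VF D x : canonical_val D x = VF <-> ~ D x.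
Proof.
  unfold canonical_val.
  destruct (excluded_middle_informative (D x)), (excluded_middle_informative (D (Neg x)));
    split; intro; solve [tauto | discriminate | reflexivity].
Qed.

Lemma designated_canonical_val D x : designated (canonical_val D x) <-> D x.
Proof.
  unfold designated. rewrite canonical_val_eq_VT, canonical_val_eq_Vt. tauto.
Qed.

Lemma canonical_val_ext D x y :
  (D x <-> D y) -> (D (Neg x) <-> D (Neg y)) -> canonical_val D x = canonical_val D y.
Proof.
  intros Hxy Hnxy. unfold canonical_val.
  destruct (excluded_middle_informative (D x)), (excluded_middle_informative (D (Neg x))),
    (excluded_middle_informative (D y)), (excluded_middle_informative (D (Neg y)));
    solve [reflexivity | tauto].
Qed.

Lemma canonical_val_classical D z (P : Prop) :
  (D z <-> P) -> (P -> designated (canonical_val D z)) /\ (~ P -> canonical_val D z = VF).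
Proof. intro Hz. rewrite designated_canonical_val, canonical_val_eq_VF, Hz. tauto. Qed.

Section CanonicalValuation.

Variables (n k : nat) (phi : formula) (D : formula -> Prop).
Hypothesis HD : saturated (Lnk_axiom n k) phi D.

Lemma saturated_dn a : D (Neg (Neg a)) <-> D a.
Proof. apply (saturated_iff (Ax_mbC n k) HD), (saturated_axiom HD), Ax_dn. Qed.

Lemma saturated_ip j a : 1 <= j -> j < k -> D (Neg (circn j (Neg a))) <-> D (Neg (circn j a)).
Proof.
  intros Hj1 Hjk.
  apply (saturated_iff (Ax_mbC n k) HD), (saturated_axiom HD), Ax_ip; assumption.
Qed.

Lemma saturated_circ a : D (Circ a) <-> ~ (D a /\ D (Neg a)).
Proof.
  split.
  - intros Hc [Ha Hn]. exact (saturated_bc1 (Ax_mbC n k) HD Hc Ha Hn).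
  - intro Hcons.
    assert (Hciw : D (Or (Circ a) (And a (Neg a)))) by apply (saturated_axiom HD), Ax_ciw.
    rewrite (saturated_or (Ax_mbC n k) HD), (saturated_and (Ax_mbC n k) HD) in Hciw. tauto.
Qed.

Lemma saturated_contradictory_circn_Neg j a : j < k ->
  (D (circn j a) /\ D (Neg (circn j a))) <->
  (D (circn j (Neg a)) /\ D (Neg (circn j (Neg a)))).
Proof.
  induction j as [|j IH]; intro Hjk; simpl.
  - rewrite saturated_dn. tauto.
  - pose proof (saturated_ip (j := S j) a ltac:(lia) Hjk) as Hip. simpl in Hip.
    rewrite !saturated_circ, IH by lia. tauto.
Qed.

Lemma canonical_val_Neg a : neg_m (canonical_val D a) (canonical_val D (Neg a)).
Proof.
  destruct (classic (D a)) as [Ha|Ha]; [destruct (classic (D (Neg a))) as [Hn|Hn]|].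
  - rewrite (proj2 (canonical_val_eq_Vt D a)) by tauto. simpl.
    apply canonical_val_eq_Vt. rewrite saturated_dn. tauto.
  - rewrite (proj2 (canonical_val_eq_VT D a)) by tauto. simpl.
    apply canonical_val_eq_VF, Hn.
  - rewrite (proj2 (canonical_val_eq_VF D a)) by exact Ha. simpl.
    apply canonical_val_eq_VT. rewrite saturated_dn.
    destruct (saturated_tnd (Ax_mbC n k) HD a); tauto.
Qed.

Lemma canonical_val_Circ a : circ_m (canonical_val D a) (canonical_val D (Circ a)).
Proof.
  destruct (canonical_val D a) eqn:E; simpl.
  - apply designated_canonical_val, saturated_circ. rewrite <- canonical_val_eq_Vt, E. discriminate.
  - apply canonical_val_eq_VF. rewrite saturated_circ, <- canonical_val_eq_Vt. tauto.
  - apply designated_canonical_val, saturated_circ. rewrite <- canonical_val_eq_Vt, E. discriminate.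
Qed.

Lemma canonical_val_valuation : valuation (canonical_val D).
Proof.
  intros a b. split; [apply canonical_val_Neg|]. split; [apply canonical_val_Circ|].
  unfold and_m, or_m, imp_m.
  rewrite (designated_canonical_val D a), (designated_canonical_val D b).
  split; [|split]; apply canonical_val_classical.
  - apply (saturated_and (Ax_mbC n k) HD).
  - apply (saturated_or (Ax_mbC n k) HD).
  - apply (saturated_imp (Ax_mbC n k) HD).
Qed.

Lemma canonical_val_cc a :
  canonical_val D (circn n a) = VT \/ canonical_val D (circn n a) = VF ->
  canonical_val D (circn (S n) a) = VT.
Proof.
  intro Hval.
  assert (Hc : D (Circ (circn n a))).
  { apply saturated_circ. rewrite <- canonical_val_eq_Vt.
    destruct Hval as [E|E]; rewrite E; discriminate. }
  assert (Hcc : D (Circ (Circ (circn n a)))).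
  { pose proof (saturated_axiom HD (Ax_cc n k a)) as H. rewrite Nat.add_comm in H. exact H. }
  apply canonical_val_eq_VT. rewrite saturated_circ in Hcc. simpl. tauto.
Qed.

Lemma canonical_val_ip j a : 1 <= j -> j <= k - 1 ->
  canonical_val D (circn j a) = canonical_val D (circn j (Neg a)).
Proof.
  intros Hj1 Hjk. destruct j as [|j]; [lia|]. apply canonical_val_ext.
  - simpl. rewrite !saturated_circ, (saturated_contradictory_circn_Neg (j := j) a) by lia. tauto.
  - symmetry. apply saturated_ip; lia.
Qed.

Lemma canonical_val_in_Fnk : in_Fnk n k (canonical_val D).
Proof.
  split; [exact canonical_val_valuation|].
  split; [exact canonical_val_cc | exact canonical_val_ip].
Qed.

End CanonicalValuation.

Theorem theorem27 (n k : nat) (Hk : 1 <= k) (a : formula) :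
  Rnk_valid n k a -> Lnk_provable n k a.
Proof.
  intro Hvalid. apply NNPP. intro Hunprovable.
  assert (Hsat : saturated (Lnk_axiom n k) a (lindenbaum (Lnk_axiom n k) a)).
  { apply (lindenbaum_saturated (Ax_mbC n k)). intro Hder.
    apply Hunprovable, Lnk_provable_of_derivable, Hder. }
  apply (saturated_not Hsat), designated_canonical_val.
  exact (Hvalid _ (canonical_val_in_Fnk Hsat)).
Qed.
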